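(* For every graph $G=(V,E)$, the projection onto the $x$-variables of the linear relaxation of $\mathcal{E}(G)$ is contained in the linear relaxation of $\mathcal{N}_2(G)$; consequently, for every weight vector $w$, the linear relaxation value of $\mathcal{E}(G)$ is at most that of $\mathcal{N}_2(G)$. Moreover, the containment is strict when $G$ is the star $K_{1,3}$.
   Context: $N(u)$ is the neighborhood of $u$, $\delta(v)$ the set of edges incident to $v$, $x(A)=\sum_{a\in A}x_a$. Both formulations compute a maximum $w$-weighted co-2-plex (vertex set inducing maximum degree at most 1). $\mathcal{N}_2(G)=\max\{w^\top x: x\in\{0,1\}^V,\ x(N(u))+(|N(u)|-1)x_u\le|N(u)|\ \forall u\in V\}$. $\mathcal{E}(G)=\max\{w^\top x: (x,y)\in\{0,1\}^V\times\{0,1\}^E,\ y(\delta(v))\le x_v\ \forall v\in V,\ y_e\ge 0\ \forall e\in E,\ x_u+x_v-y_{uv}\le 1\ \forall uv\in E\}$. The linear relaxation of a formulation replaces the binary constraints by $[0,1]$ bounds. *)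

From mathcomp Require Import all_boot all_order all_algebra.
Set Implicit Arguments. Unset Strict Implicit. Unset Printing Implicit Defensive.
Import Order.TTheory GRing.Theory Num.Theory.
Local Open Scope ring_scope.

(* A (finite simple) graph: vertex type T : finType, adjacency e : rel T,
   assumed symmetric and irreflexive (hypotheses in the theorem). *)

Definition nbhd (T : finType) (e : rel T) (u : T) : {set T} := [set v | e u v].

Definition edges (T : finType) (e : rel T) : {set {set T}} :=
  [set f : {set T} | [exists u : T, exists v : T, e u v && (f == [set u; v])]].

Definition delta (T : finType) (e : rel T) (v : T) : {set {set T}} :=
  [set f in edges e | v \in f].

Definition xsum (R : realFieldType) (T : finType) (x : T -> R) (A : {set T}) : R :=
  \sum_(a in A) x a.

Definition ysum (R : realFieldType) (T : finType) (y : {set T} -> R)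
  (A : {set {set T}}) : R := \sum_(f in A) y f.

Definition relaxN2 (R : realFieldType) (T : finType) (e : rel T) (x : T -> R) : Prop :=
  (forall v, 0 <= x v <= 1) /\
  (forall u, xsum x (nbhd e u) + (#|nbhd e u|%:R - 1) * x u <= #|nbhd e u|%:R).

(* Linear relaxation of E(G); y is a function on vertex subsets, only its
   values on edges matter. *)
Definition relaxE (R : realFieldType) (T : finType) (e : rel T)
  (x : T -> R) (y : {set T} -> R) : Prop :=
  (forall v, 0 <= x v <= 1) /\
  (forall f, f \in edges e -> 0 <= y f <= 1) /\
  (forall v, ysum y (delta e v) <= x v) /\
  (forall f, f \in edges e -> 0 <= y f) /\
  (forall u v, e u v -> x u + x v - y [set u; v] <= 1).

Definition projE (R : realFieldType) (T : finType) (e : rel T) (x : T -> R) : Prop :=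
  exists y : {set T} -> R, relaxE e x y.

Definition wval (R : realFieldType) (T : finType) (w x : T -> R) : R :=
  \sum_(v : T) w v * x v.

Definition K13 : rel 'I_4 :=
  fun i j => (i != j) && ((i == ord0) || (j == ord0)).

(* Every edge variable y_uv is at least x_u + x_v - 1, and the edges at u carry total
   weight at most x_u; summing over the neighbours v of u therefore gives
   x(N(u)) <= |N(u)| (1 - x_u) + x_u, which is the N_2 inequality at u.  The
   inclusion is strict on K_{1,3}: with x = 1/2 at the centre, 1 at two leaves and 0
   at the third, both loaded edges need y >= 1/2, exceeding the centre's budget 1/2. *)

From mathcomp Require Import all_boot all_order all_algebra.
From mathcomp Require Import lra.
Import Order.TTheory GRing.Theory Num.Theory.
Local Open Scope ring_scope.

Lemma ler_sum_subset (R : numDomainType) (T : finType) (A B : {set T})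
    (F : T -> R) :
  A \subset B -> (forall t, t \in B -> 0 <= F t) ->
  \sum_(t in A) F t <= \sum_(t in B) F t.
Proof.
move=> AB F0; rewrite [X in _ <= X](big_setID A) /= (setIidPr AB) lerDl.
by apply: sumr_ge0 => t; rewrite inE => /andP[_ /F0].
Qed.

Section EdgeFormulation.

Variables (R : realFieldType) (T : finType) (e : rel T).
Hypothesis e_irr : irreflexive e.

Lemma edge_in_delta (u v : T) : e u v -> [set u; v] \in delta e u.
Proof.
move=> euv; rewrite !inE eqxx andbT.
by apply/existsP; exists u; apply/existsP; exists v; rewrite euv eqxx.
Qed.

(* v |-> {u, v} is injective on N(u) because u is not its own neighbour. *)
Lemma sum_nbhd_le_ysum_delta (u : T) (y : {set T} -> R) :
  (forall f, f \in edges e -> 0 <= y f) ->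
  \sum_(v in nbhd e u) y [set u; v] <= ysum y (delta e u).
Proof.
move=> y_ge0; rewrite /ysum -(big_imset (fun f => y f)); last first.
  move=> v1 v2; rewrite !inE => euv1 _ E12.
  have : v1 \in [set u; v2] by rewrite -E12 !inE eqxx orbT.
  rewrite !inE => /orP[/eqP E1|/eqP //].
  by move: euv1; rewrite E1 e_irr.
apply: ler_sum_subset => [|f]; last by rewrite inE => /andP[/y_ge0].
by apply/subsetP => f /imsetP[v]; rewrite inE => /edge_in_delta + ->.
Qed.

Lemma projE_relaxN2 (x : T -> R) : projE e x -> relaxN2 e x.
Proof.
move=> [y [x01 [_ [y_delta [y_ge0 y_edge]]]]]; split => // u.
have x_nbhd : xsum x (nbhd e u) <= \sum_(v in nbhd e u) (1 - x u + y [set u; v]).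
  by apply: ler_sum => v; rewrite inE => /y_edge; lra.
have y_nbhd : \sum_(v in nbhd e u) y [set u; v] <= x u.
  exact: le_trans (sum_nbhd_le_ysum_delta u y y_ge0) (y_delta u).
move: x_nbhd; rewrite big_split /= sumr_const -mulr_natl.
set d := (#|nbhd e u|%:R : R); lra.
Qed.

Lemma relaxE_value_le_relaxN2 (w x : T -> R) (y : {set T} -> R) :
  relaxE e x y -> exists x' : T -> R, relaxN2 e x' /\ wval w x <= wval w x'.
Proof. by move=> xyE; exists x; split => //; apply: projE_relaxN2; exists y. Qed.

End EdgeFormulation.

Definition i1 : 'I_4 := Ordinal (isT : (1 < 4)%N).
Definition i2 : 'I_4 := Ordinal (isT : (2 < 4)%N).
Definition i3 : 'I_4 := Ordinal (isT : (3 < 4)%N).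

Lemma ord4P (u : 'I_4) : [\/ u = ord0, u = i1, u = i2 | u = i3].
Proof.
case: u => [[|[|[|[|//]]]] ?];
  [constructor 1 | constructor 2 | constructor 3 | constructor 4]; exact: val_inj.
Qed.

Lemma sum_ord4_in (R : realFieldType) (A : {set 'I_4}) (F : 'I_4 -> R) :
  \sum_(i in A) F i = (if ord0 \in A then F ord0 else 0) + (if i1 \in A then F i1 else 0)
    + (if i2 \in A then F i2 else 0) + (if i3 \in A then F i3 else 0).
Proof.
rewrite big_mkcond /= !big_ord_recl big_ord0 addr0 !addrA.
by congr (_ + _ + _ + _); congr (if _ \in A then F _ else 0); apply/val_inj.
Qed.

Lemma K13_relaxN2_not_projE (R : realFieldType) :
  exists x : 'I_4 -> R, relaxN2 K13 x /\ ~ projE K13 x.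
Proof.
pose x (i : 'I_4) : R := if val i == 0%N then 1/2 else if val i == 3%N then 0 else 1.
exists x; split.
  split=> [v|u]; first by case: (ord4P v) => ->; rewrite /x /=; apply/andP; split; lra.
  rewrite /xsum -sumr_const !sum_ord4_in.
  by case: (ord4P u) => ->; rewrite !inE /K13 /x /=; lra.
move=> [y [_ [_ [y_delta [y_ge0 y_edge]]]]].
have y01 := y_edge ord0 i1 isT; have y02 := y_edge ord0 i2 isT.
have y_centre : y [set ord0; i1] + y [set ord0; i2] <= ysum y (delta K13 ord0).
  have i1_i2 : [set ord0; i1] != [set ord0; i2].
    by apply/negP => /eqP/setP/(_ i1); rewrite !inE.
  have -> : y [set ord0; i1] + y [set ord0; i2] =
            \sum_(f in [set [set ord0; i1]; [set ord0; i2]]) y f.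
    by rewrite big_setU1 ?big_set1 ?inE.
  apply: ler_sum_subset => [|f]; last by rewrite inE => /andP[/y_ge0].
  by apply/subsetP => f; rewrite in_set2 => /orP[]/eqP->; apply: edge_in_delta.
have := y_delta ord0; move: y01 y02 y_centre; rewrite /x /=; lra.
Qed.

Theorem mainTheorem16 (R : realFieldType) :
  (forall (T : finType) (e : rel T), symmetric e -> irreflexive e ->
     forall x : T -> R, projE e x -> relaxN2 e x) /\
  (forall (T : finType) (e : rel T), symmetric e -> irreflexive e ->
     forall w : T -> R, forall (x : T -> R) (y : {set T} -> R), relaxE e x y ->
       exists x' : T -> R, relaxN2 e x' /\ wval w x <= wval w x') /\
  (exists x : 'I_4 -> R, relaxN2 K13 x /\ ~ projE K13 x).
Proof.
split; first by move=> T e _ e_irr x; apply: projE_relaxN2.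
split; last exact: K13_relaxN2_not_projE.
by move=> T e _ e_irr w x y; apply: relaxE_value_le_relaxN2.
Qed.
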